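(* Let $q$ be a prime power with $q\equiv1\pmod 4$ and let $P_q=\Gamma(\mathbb{F}_q,S)$ be the Paley graph, where $S$ is the set of nonzero quadratic residues in $\mathbb{F}_q$. Then $\Theta_{\mathrm{lin}}(P_q)=\sqrt q$. In particular, $\Theta_{\mathrm{lin}}(C_5)=\sqrt5$, where $C_5$ is the $5$-cycle (identified with $P_5$).
   Context: For a symmetric set $S\subseteq\mathbb{F}_q\setminus\{0\}$ ($S=-S$), the Cayley graph $\Gamma(\mathbb{F}_q,S)$ has vertex set $\mathbb{F}_q$, with $u\sim v$ iff $u-v\in S$. $G^k$ is the $k$-fold strong product: vertex set $\mathbb{F}_q^k$, distinct vertices adjacent iff in each coordinate they are equal or adjacent in $G$. $\alpha_{\mathrm{lin}}(G^k)$ is the largest size of an independent set of $G^k$ that is a linear subspace of $\mathbb{F}_q^k$, and the linear Shannon capacity is $\Theta_{\mathrm{lin}}(G)=\sup_k\alpha_{\mathrm{lin}}(G^k)^{1/k}$. *)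

From HB Require Import structures.
From mathcomp Require Import all_boot all_order all_algebra all_field.
From mathcomp Require Import all_classical all_reals.
From mathcomp Require Import exp.
Set Implicit Arguments. Unset Strict Implicit. Unset Printing Implicit Defensive.
Import Order.TTheory GRing.Theory Num.Theory.
Local Open Scope ring_scope.

(* Cayley graph Gamma(F, S) on the additive group of a finite field:
   u ~ v iff u - v \in S  (S is assumed symmetric, 0 \notin S). *)
Definition cayley_adj (F : finFieldType) (S : {set F}) (u v : F) : bool :=
  (u - v) \in S.

Definition strong_adj (F : finFieldType) (S : {set F}) (k : nat)
    (u v : 'rV[F]_k) : bool :=
  (u != v) && [forall i, (u 0 i == v 0 i) || cayley_adj S (u 0 i) (v 0 i)].

Definition indep (F : finFieldType) (S : {set F}) (k : nat)
    (I : {set 'rV[F]_k}) : bool :=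
  [forall u in I, forall v in I, ~~ strong_adj S u v].

Definition rowspace_set (F : finFieldType) (k : nat) (A : 'M[F]_k)
    : {set 'rV[F]_k} := [set v | (v <= A)%MS].

(* alpha_lin(G^k): largest size of an independent set which is a linear
   subspace of F^k (every subspace of F^k is the row space of some k x k
   matrix). *)
Definition alpha_lin (F : finFieldType) (S : {set F}) (k : nat) : nat :=
  \max_(A : 'M[F]_k | indep S (rowspace_set A)) #|rowspace_set A|.

Definition Theta_lin (R : realType) (F : finFieldType) (S : {set F}) : R :=
  sup [set x : R | exists k : nat, (0 < k)%N /\
         x = powR (alpha_lin S k)%:R (k%:R^-1)].

Definition quad_res (F : finFieldType) : {set F} :=
  [set x : F | (x != 0) && [exists y : F, y ^+ 2 == x]].

Definition C5_set : {set 'F_5} := [set (1 : 'F_5); -1].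

From HB Require Import structures.
From mathcomp Require Import all_boot all_order all_algebra all_field.
From mathcomp Require Import all_classical all_reals.
From mathcomp Require Import exp.
From mathcomp Require Import zify.
Import Order.TTheory GRing.Theory Num.Theory.
Local Open Scope ring_scope.
Set Implicit Arguments. Unset Strict Implicit. Unset Printing Implicit Defensive.

(* If a subspace V of F^k is independent in
   P_q^k, every nonzero w in V is not adjacent to 0, so some coordinate of w is
   a nonzero non-square.  A covering bound in the spirit of Alon's
   Combinatorial Nullstellensatz then gives dim V * (q - 1) <= k * #|nonsq|:
   otherwise the product over coordinates i and non-squares n of (w_i - n),
   viewed as a polynomial in the coordinates of w on a basis of V, has too
   small a degree and sums to 0 over V (Chevalley-Warning), whereas it vanishes
   on V \ {0} and not at 0.  As #|nonsq| <= (q - 1) / 2, dim V <= k / 2 and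
   alpha_lin(P_q^k)^2 <= q^k.

   For a non-square a (odd characteristic), the line F (1, a) is
   independent in P_q^2, so alpha_lin(P_q^2) = q and the supremum defining
   Theta_lin is attained at k = 2.  Finally C_5 is P_5. *)

Section FiniteFieldFacts.
Variable F : finFieldType.

Lemma card_finField_pchar (p : nat) : p \in [pchar F] ->
  exists2 n, (0 < n)%N & #|F| = (p ^ n)%N.
Proof.
move=> pc; have cardF := card_pprimeChar pc.
exists (logn p #|F|) => //; rewrite lt0n; apply/eqP => logn0.
by have := finNzRing_gt1 F; rewrite cardF logn0.
Qed.

Lemma card_finField_eq0 : #|F|%:R = 0 :> F.
Proof.
have [p _ pc] := finPcharP F; have [n n_gt0 ->] := card_finField_pchar pc.
by rewrite natrX (pcharf0 pc) expr0n gtn_eqF.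
Qed.

Lemma card_nonzero : #|[set x : F | x != 0]| = #|F|.-1.
Proof. by rewrite -(cardC1 (0 : F)); apply: eq_card => x; rewrite !inE. Qed.

Lemma sum_powers_eq0 (e : nat) : (e < #|F|.-1)%N -> \sum_(s : F) s ^+ e = 0.
Proof.
case: e => [|e] lt_e_q.
  by under eq_bigr do rewrite expr0; rewrite sumr_const card_finField_eq0.
(* X^(e+1) - 1 has at most e+1 < #|F| - 1 roots, so some a != 0 has a^(e+1) != 1 *)
have [a a_neq0 ae_neq1] : exists2 a : F, a != 0 & a ^+ e.+1 != 1.
  apply/exists_inP; apply: contraLR lt_e_q; rewrite negb_exists_in -leqNgt.
  move=> /forall_inP unity; rewrite -card_nonzero cardE.
  apply: max_unity_roots (enum_uniq _) => //.
  apply/allP => x; rewrite mem_enum inE => x_neq0.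
  by rewrite unity_rootE; have := unity x x_neq0; rewrite negbK.
(* the substitution s |-> a s multiplies the power sum by a^(e+1) *)
have scaled : \sum_(s : F) s ^+ e.+1 = a ^+ e.+1 * \sum_(s : F) s ^+ e.+1.
  rewrite mulr_sumr (reindex_inj (mulfI a_neq0)) /=.
  by apply: eq_bigr => s _; rewrite exprMn.
apply/eqP; move/eqP: scaled; rewrite -subr_eq0 -{1}[X in X - _]mul1r -mulrBl.
by rewrite mulf_eq0 subr_eq0 eq_sym (negbTE ae_neq1).
Qed.

End FiniteFieldFacts.

Section PolynomialFunctions.
Variables (F : finFieldType) (r : nat).

(* polyfun n f: f : F^r -> F is (extensionally) a polynomial function of total
   degree at most n, i.e. a sum of monomials c * \prod_i t_i^(e i), sum e <= n. *)
Inductive polyfun (n : nat) : ({ffun 'I_r -> F} -> F) -> Prop :=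
| PolyfunMonomial (c : F) (e : 'I_r -> nat) : (\sum_i e i <= n)%N ->
    polyfun n (fun t => c * \prod_i t i ^+ e i)
| PolyfunAdd f g : polyfun n f -> polyfun n g -> polyfun n (fun t => f t + g t)
| PolyfunExt f g : polyfun n f -> f =1 g -> polyfun n g.

(* Power-sum vanishing (as in Chevalley-Warning): a polynomial function of degree less than
   r (#|F| - 1) sums to zero over F^r, as some exponent of each monomial is
   below #|F| - 1. *)
Lemma polyfun_sum_eq0 n f : polyfun n f -> (n < r * #|F|.-1)%N -> \sum_t f t = 0.
Proof.
move=> pf lt_n_rq; elim: pf => {f} [c e sum_e| f g _ f0 _ g0| f g _ f0 fg].
- rewrite -mulr_sumr -(bigA_distr_bigA (fun i (s : F) => s ^+ e i)) /=.
  have [i lt_ei] : exists i, (e i < #|F|.-1)%N.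
    apply/existsP; apply: contraLR lt_n_rq; rewrite negb_exists -leqNgt.
    move=> /forallP large; apply: leq_trans sum_e.
    rewrite -[X in (X * _)%N]card_ord -sum_nat_const; apply: leq_sum => i _.
    by rewrite leqNgt large.
  by rewrite (bigD1 i) //= sum_powers_eq0 // mul0r mulr0.
- by rewrite big_split /= f0 g0 addr0.
- by under eq_bigr do rewrite -fg.
Qed.

Lemma polyfun_const n (c : F) : polyfun n (fun _ => c).
Proof.
apply: (@PolyfunExt _ (fun t => c * \prod_i t i ^+ 0)).
  by apply: PolyfunMonomial; rewrite big1.
by move=> t /=; rewrite big1 ?mulr1 // => i _; rewrite expr0.
Qed.

Lemma polyfun_mul a b f g :
  polyfun a f -> polyfun b g -> polyfun (a + b) (fun t => f t * g t).
Proof.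
move=> pf; elim: pf g => {f} [c e sum_e| f1 f2 _ IH1 _ IH2| f1 f2 _ IH f12] g pg.
- elim: pg => {g} [c' e' sum_e'| g1 g2 _ IH1 _ IH2| g1 g2 _ IH g12].
  + apply: (@PolyfunExt _ (fun t => c * c' * \prod_i t i ^+ (e i + e' i))).
      by apply: PolyfunMonomial; rewrite big_split /= leq_add.
    move=> t /=; rewrite mulrACA -big_split /=.
    by congr (_ * _); apply: eq_bigr => i _; rewrite exprD.
  + by apply: PolyfunExt (PolyfunAdd IH1 IH2) _ => t /=; rewrite mulrDr.
  + by apply: PolyfunExt IH _ => t /=; rewrite g12.
- by apply: PolyfunExt (PolyfunAdd (IH1 g pg) (IH2 g pg)) _ => t /=; rewrite mulrDl.
- by apply: PolyfunExt (IH g pg) _ => t /=; rewrite f12.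
Qed.

Lemma polyfun_affine (c : 'I_r -> F) (d : F) :
  polyfun 1 (fun t => \sum_j t j * c j + d).
Proof.
have var j : polyfun 1 (fun t => t j).
  apply: (@PolyfunExt _ (fun t => 1 * \prod_i t i ^+ (i == j))).
    by apply: PolyfunMonomial; rewrite (bigD1 j) //= big1 ?eqxx // => i /negbTE ->.
  move=> t /=; rewrite mul1r (bigD1 j) //= eqxx expr1 big1 ?mulr1 //.
  by move=> i /negbTE ->; rewrite expr0.
apply: PolyfunAdd (polyfun_const _ d); elim: (index_enum _) => [|j s IH].
  by apply: PolyfunExt (polyfun_const _ 0) _ => t; rewrite big_nil.
apply: PolyfunExt (PolyfunAdd (polyfun_mul (var j) (polyfun_const 0 (c j))) IH) _.
by move=> t; rewrite big_cons.
Qed.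

Lemma polyfun_prod (I : finType) (A : {pred I}) n (G : I -> {ffun 'I_r -> F} -> F) :
  (forall i, i \in A -> polyfun n (G i)) ->
  polyfun (#|A| * n) (fun t => \prod_(i in A) G i t).
Proof.
move=> pG; rewrite cardE.
suff prod_seq s : {subset s <= A} ->
    polyfun (size s * n) (fun t => \prod_(i <- s) G i t).
  have enumA : {subset enum A <= A} by move=> i; rewrite mem_enum.
  have pE := prod_seq _ enumA.
  by apply: PolyfunExt pE _ => t; rewrite big_enum.
elim: s => [|i s IH] sA.
  by apply: PolyfunExt (polyfun_const _ 1) _ => t; rewrite big_nil.
have sA' : {subset s <= A} by move=> j js; apply: sA; rewrite inE js orbT.
have pGs := polyfun_mul (pG i (sA i (mem_head i s))) (IH sA').
by rewrite /= mulSn; apply: PolyfunExt pGs _ => t; rewrite big_cons.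
Qed.

End PolynomialFunctions.

Section QuadraticResidues.
Variable F : finFieldType.

Definition nonsq : {set F} := [set x : F | (x != 0) && (x \notin quad_res F)].

Lemma quad_resP (x : F) :
  reflect (x != 0 /\ exists y, y ^+ 2 = x) (x \in quad_res F).
Proof.
rewrite inE; apply: (iffP andP) => [[x_neq0 /existsP[y /eqP yx]]|[x_neq0 [y yx]]].
  by split => //; exists y.
by split => //; apply/existsP; exists y; rewrite yx.
Qed.

Lemma quad_res_div (x y : F) :
  x \in quad_res F -> y \in quad_res F -> x / y \in quad_res F.
Proof.
case/quad_resP => x_neq0 [u ux] /quad_resP[y_neq0 [v vy]]; apply/quad_resP.
by split; [rewrite mulf_neq0 ?invr_eq0 | exists (u / v); rewrite expr_div_n ux vy].
Qed.

Lemma card_nonzero_split : #|F|.-1 = (#|quad_res F| + #|nonsq|)%N.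
Proof.
rewrite -card_nonzero -(cardsID (quad_res F)); congr (_ + _)%N; apply: eq_card => x.
  by rewrite !inE andb_idl // => /andP[].
by rewrite !inE andbC.
Qed.

(* squaring is at most two-to-one on the nonzero elements *)
Lemma card_nonzero_le_quad_res : (#|F|.-1 <= 2 * #|quad_res F|)%N.
Proof.
rewrite -card_nonzero -sum1_card (partition_big (fun y => y ^+ 2) (mem (quad_res F))).
  rewrite mulnC -sum_nat_const; apply: leq_sum => _ /quad_resP[_ [y0 <-]].
  rewrite sum1dep_card; apply: (@leq_trans #|[set y0; - y0]|).
  - by apply/subset_leq_card/fintype.subsetP => y; rewrite !inE eqf_sqr => /andP[].
  - by rewrite cards2; case: (_ != _).
by move=> y; rewrite inE => y_neq0; apply/quad_resP; split; [rewrite expf_eq0 | exists y].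
Qed.

Lemma card_nonsq_le : (2 * #|nonsq| <= #|F|.-1)%N.
Proof. by have := card_nonzero_le_quad_res; rewrite card_nonzero_split; lia. Qed.

(* In odd characteristic squaring identifies 1 and -1, so it is not injective;
   its image misses some nonzero element, which is a non-square. *)
Lemma nonsq_exists : 2%:R != 0 :> F -> exists a, a \in nonsq.
Proof.
move=> two_neq0; set squares := [set y ^+ 2 | y in F].
have lt_squares : (#|squares| < #|F|)%N.
  rewrite ltn_neqAle leq_imset_card andbT; apply: contra two_neq0 => /imset_injP.
  move=> sq_inj; have one_opp : (1 : F) = -1 by apply: sq_inj; rewrite ?inE ?sqrrN.
  by rewrite mulr2n {2}one_opp subrr.
have quad_sub : quad_res F \subset squares :\ 0.
  by apply/fintype.subsetP => x /quad_resP[x_neq0 [y yx]]; rewrite !inE x_neq0 -yx; apply: imset_f.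
have := subset_leq_card quad_sub; move: lt_squares.
have zero_sq : (0 : F) \in squares by apply/imsetP; exists 0; rewrite ?expr0n.
rewrite [#|squares|](cardsD1 0) zero_sq add1n => lt_squares le_quad.
have : (#|quad_res F| < #|F|.-1)%N.
  by rewrite ltn_predRL (leq_trans _ lt_squares) // !ltnS.
by rewrite card_nonzero_split -[X in (X < _)%N]addn0 ltn_add2l => /card_gt0P.
Qed.

End QuadraticResidues.

Section LinearIndependentSets.
Variable F : finFieldType.

Lemma card_rowspace k (A : 'M[F]_k) : #|rowspace_set A| = (#|F| ^ \rank A)%N.
Proof.
have -> : rowspace_set A = [set t *m row_base A | t : 'rV[F]_(\rank A)].
  apply/setP => v; rewrite inE; apply/idP/imsetP => [|[t _ ->]].
    by rewrite -(eq_row_base A) => /submxP[t ->]; exists t.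
  by rewrite -(eq_row_base A) submxMl.
by rewrite card_imset ?card_mx ?mul1n //; apply/row_free_inj/row_base_free.
Qed.

(* Otherwise the polynomial function
     G t = \prod_i \prod_(n in N) ((t *m row_base A)_i - n)
   has degree k #|N| < rank A (#|F| - 1), so sums to 0 over F^(rank A);
   but it vanishes at every t != 0 and not at t = 0. *)
Lemma rank_cover_bound k (A : 'M[F]_k) (N : {set F}) : 0 \notin N ->
  (forall w : 'rV[F]_k, (w <= A)%MS -> w != 0 -> exists i, w 0 i \in N) ->
  (\rank A * #|F|.-1 <= k * #|N|)%N.
Proof.
move=> N0 cover; rewrite leqNgt; apply/negP => small.
set B := row_base A; set r := \rank A in B small *.
pose coord (t : {ffun 'I_r -> F}) i := \sum_j t j * B j i.
pose G t := \prod_(i in 'I_k) \prod_(n in N) (coord t i - n).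
have degG : polyfun (#|'I_k| * (#|N| * 1)) G.
  by apply: polyfun_prod => i _; apply: polyfun_prod => n _; apply: polyfun_affine.
have := polyfun_sum_eq0 degG; rewrite card_ord muln1 => /(_ small).
have G_vanish t : t != [ffun => 0] -> G t = 0.
  move=> t_neq0; pose w := (\row_j t j) *m B.
  have wA : (w <= A)%MS by rewrite -(eq_row_base A) submxMl.
  have w_neq0 : w != 0.
    apply: contra t_neq0 => /eqP w0; apply/eqP/ffunP => j; rewrite ffunE.
    suff /rowP/(_ j) : \row_j t j = 0 :> 'rV_r by rewrite !mxE.
    by apply: (row_free_inj (row_base_free A)); rewrite mul0mx.
  have [i wiN] := cover w wA w_neq0.
  have wiE : w 0 i = coord t i by rewrite !mxE; apply: eq_bigr => j _; rewrite mxE.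
  by rewrite /G (bigD1 i) //= (bigD1 (w 0 i)) //= wiE subrr !mul0r.
rewrite (bigD1 [ffun => 0]) //= big1 ?addr0 => [|t /G_vanish //].
apply/eqP; rewrite prodf_seq_neq0; apply/allP => i _ /=.
rewrite prodf_seq_neq0; apply/allP => n _; apply/implyP => nN.
rewrite /coord big1 ?sub0r ?oppr_eq0 => [|j _]; last by rewrite ffunE mul0r.
by apply: contraNneq N0 => <-.
Qed.

(* In a subspace independent in the strong powers of the Paley graph, every
   nonzero vector w (adjacent to nothing, in particular not to 0) has a
   nonzero coordinate that is not a square. *)
Lemma indep_nonzero_nonsq k (A : 'M[F]_k) (w : 'rV[F]_k) :
  indep (quad_res F) (rowspace_set A) -> (w <= A)%MS -> w != 0 ->
  exists i, w 0 i \in nonsq F.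
Proof.
move=> /forall_inP indepA wA w_neq0.
have wI : w \in rowspace_set A by rewrite inE.
have /forall_inP/(_ 0) := indepA w wI; rewrite inE sub0mx => /(_ isT).
rewrite /strong_adj w_neq0 negb_forall => /existsP[i].
by rewrite negb_or /cayley_adj !mxE subr0 => /andP[wi_neq0 wi_nsq]; exists i; rewrite inE wi_neq0.
Qed.

(* Paley bound: independent subspaces of F^k have dimension at most k / 2,
   by the covering bound with N the non-squares, #|N| <= (#|F| - 1) / 2. *)
Lemma rank_indep_le k (A : 'M[F]_k) :
  indep (quad_res F) (rowspace_set A) -> (2 * \rank A <= k)%N.
Proof.
move=> indepA; have nonsq0 : 0 \notin nonsq F by rewrite inE eqxx.
have cover := rank_cover_bound nonsq0 (fun w => indep_nonzero_nonsq indepA).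
have q1_gt0 : (0 < #|F|.-1)%N by rewrite ltn_predRL finNzRing_gt1.
rewrite -(leq_pmul2r q1_gt0) -mulnA (leq_trans (leq_mul (leqnn 2) cover)) //.
by rewrite mulnCA leq_mul2l card_nonsq_le orbT.
Qed.

Lemma alpha_lin_sq_le k : (alpha_lin (quad_res F) k ^ 2 <= #|F| ^ k)%N.
Proof.
have q_gt0 : (0 < #|F|)%N by apply/card_gt0P; exists 0.
rewrite /alpha_lin; elim/big_ind: _ => [|x y x_le y_le|A indepA].
- by rewrite exp0n // expn_gt0 q_gt0.
- by rewrite /maxn; case: ifP.
- by rewrite card_rowspace -expnM mulnC leq_pexp2l ?rank_indep_le.
Qed.

(* In odd characteristic the line spanned by (1, a), for a non-square a, is
   independent in the strong square of the Paley graph: two of its points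
   differ by (d, a d), and d, a d cannot both be squares; so alpha_lin(P^2) >= #|F|. *)
Lemma alpha_lin_two_ge : 2%:R != 0 :> F -> (#|F| <= alpha_lin (quad_res F) 2)%N.
Proof.
move=> two_neq0; have [a] := nonsq_exists two_neq0; rewrite inE => /andP[a_neq0 a_nsq].
pose u : 'rV[F]_2 := \row_j (if j == 0 then 1 else a).
pose L : 'M[F]_2 := \matrix_(i, j) u 0 j.
have on_line v : (v <= L)%MS -> v 0 1 = a * v 0 0.
  move=> /submxP[D ->]; rewrite !mxE mulr_sumr; apply: eq_bigr => i _.
  by rewrite !mxE /= mulr1 mulrC.
have indepL : indep (quad_res F) (rowspace_set L).
  apply/forall_inP => x; rewrite inE => /on_line x1.
  apply/forall_inP => y; rewrite inE => /on_line y1.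
  rewrite /strong_adj negb_and negbK orbC -implybE; apply/implyP => /forallP adj.
  have := adj 0; have := adj 1; rewrite /cayley_adj x1 y1 -mulrBr.
  case: (eqVneq (x 0 0) (y 0 0)) => [eq0 _ _ | neq0].
    apply/eqP/rowP => j; have [->|->] : j = 0 \/ j = 1.
    - by case: j => [[|[|//]]] j_lt; [left | right]; apply: val_inj.
    - by rewrite eq0.
    - by rewrite x1 y1 eq0.
  rewrite (inj_eq (mulfI a_neq0)) (negbTE neq0) /= => ad_qr d_qr.
  have := quad_res_div ad_qr d_qr; rewrite mulfK ?subr_eq0 //.
  by rewrite (negbTE a_nsq).
have scale_inj : injective (fun s : F => s *: u).
  by move=> s s' /rowP/(_ 0); rewrite !mxE /= !mulr1.
apply: leq_trans (leq_bigmax_cond L indepL); rewrite -(card_imset _ scale_inj).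
apply/subset_leq_card/fintype.subsetP => _ /imsetP[s _ ->]; rewrite inE.
have -> : u = row 0 L by apply/rowP => j; rewrite !mxE.
by rewrite scalemx_sub ?row_sub.
Qed.

End LinearIndependentSets.

Lemma two_neq0_of_card_mod4 (F : finFieldType) : (#|F| %% 4 = 1)%N -> 2%:R != 0 :> F.
Proof.
move=> q_mod4; apply/negP => /eqP two_eq0.
have two_char : 2%N \in [pchar F] by rewrite inE two_eq0 eqxx.
have [n n_gt0 cardF] := card_finField_pchar two_char.
have : (2 %| #|F|)%N by rewrite cardF dvdn_exp.
by move: q_mod4; lia.
Qed.

Lemma root_le_sqrt (R : realType) (a q k : nat) : (0 < k)%N -> (a ^ 2 <= q ^ k)%N ->
  powR (a%:R : R) k%:R^-1 <= Num.sqrt q%:R.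
Proof.
move=> k_gt0 le_aq; set y := powR _ _.
have yk : y ^+ k = a%:R.
  rewrite /y -powR_mulrn ?powR_ge0 // -powRrM mulVf ?powRr1 //.
  by rewrite pnatr_eq0 -lt0n.
rewrite leNgt; apply/negP => lt_sqrt_y.
have := ltrXn2r (2 * k) (sqrtr_ge0 _) lt_sqrt_y; rewrite muln_eq0 /= -lt0n k_gt0.
rewrite exprM sqr_sqrtr ?ler0n // mulnC exprM yk -!natrX ltr_nat.
by rewrite ltnNge le_aq.
Qed.

Lemma sup_eq_max (R : realType) (E : set R) (x : R) : E x -> ubound E x -> sup E = x.
Proof.
move=> Ex ubx; apply/eqP; rewrite eq_le ge_sup //=; last by exists x.
by apply: ub_le_sup => //; exists x.
Qed.

(* Theta_lin(P_q) = sqrt q: the bound alpha_lin(P^k)^2 <= q^k is attained at k = 2 *)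
Lemma Theta_lin_paley (R : realType) (F : finFieldType) : (#|F| %% 4 = 1)%N ->
  Theta_lin R (quad_res F) = Num.sqrt #|F|%:R.
Proof.
move=> q_mod4; have two_neq0 := two_neq0_of_card_mod4 q_mod4.
have alpha2 : alpha_lin (quad_res F) 2 = #|F|.
  apply/eqP; rewrite eqn_leq alpha_lin_two_ge // andbT.
  by rewrite -(leq_exp2r _ _ (isT : 0 < 2)%N) alpha_lin_sq_le.
apply: sup_eq_max => [|x [k [k_gt0 ->]]].
  by exists 2%N; split => //; rewrite alpha2 powR12_sqrt ?ler0n.
exact: root_le_sqrt k_gt0 (alpha_lin_sq_le _ k).
Qed.

Lemma C5_set_quad_res : C5_set = quad_res 'F_5.
Proof.
apply/setP => x; apply/idP/quad_resP => [|[x_neq0 [y yx]]].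
  rewrite !inE => /orP[]/eqP ->; split=> //; first by exists 1; rewrite expr1n.
  by exists 2%:R; apply/eqP.
rewrite -yx in x_neq0 *; rewrite !inE; move: x_neq0.
by case: y {yx} => [[|[|[|[|[|//]]]]] ?].
Qed.

Theorem mainTheorem5 (R : realType) :
  (forall F : finFieldType, (#|F| %% 4 = 1)%N ->
     Theta_lin R (quad_res F) = Num.sqrt (#|F|%:R)) /\
  Theta_lin R C5_set = Num.sqrt 5.
Proof.
split; first exact: Theta_lin_paley.
by rewrite C5_set_quad_res Theta_lin_paley card_Fp.
Qed.
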